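(* Let $I$ be a quasiconcave function and put $\widetilde I(t)=t/I(t)$. Then (i) $T_I$ is bounded on $m_{\widetilde I}$, i.e. $\|T_If\|_{m_{\widetilde I}}\lesssim\|f\|_{m_{\widetilde I}}$ for $f\in\mathcal M_+(0,1)$; (ii) $T_I$ is bounded on $L^1$ if and only if $\int_0^t\frac{I(s)}{s}ds\lesssim I(t)$ for $t\in(0,1)$.
   Context: A quasiconcave function is a nondecreasing bijection $I:(0,1)\to(0,1)$ with $I(0+)=0$, $I(1-)=1$ and $t\mapsto I(t)/t$ nonincreasing. $\mathcal M_+(0,1)$: nonnegative measurable functions on $(0,1)$; $f^*$: nonincreasing rearrangement. $T_If(t)=\frac{I(t)}{t}\sup_{t\le s<1}\frac{s}{I(s)}f^*(s)$. For a nondecreasing $J$, $\|f\|_{m_J}=\sup_{0<t<1}J(t)f^*(t)$. $A\lesssim B$ means $A\le CB$ with $C$ independent of $f$ and $t$. *)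

From HB Require Import structures.
From mathcomp Require Import all_boot all_order all_algebra.
From mathcomp Require Import all_classical all_reals all_analysis.
From mathcomp Require Import measurable_realfun.
Set Implicit Arguments. Unset Strict Implicit. Unset Printing Implicit Defensive.
Import Order.TTheory GRing.Theory Num.Theory.
Import numFieldNormedType.Exports.
Local Open Scope classical_set_scope.
Local Open Scope ring_scope.
Local Open Scope ereal_scope.

Section Defs.
Variable R : realType.
Notation mu := (@lebesgue_measure R).

Definition I01 : set R := `]0%R, 1%R[.

Definition quasiconcave (I : R -> R) : Prop :=
  (forall t, (0 < t < 1)%R -> (0 < I t < 1)%R) /\
  {in `]0%R, 1%R[ &, injective I} /\
  (forall u, (0 < u < 1)%R -> exists2 t, (0 < t < 1)%R & I t = u) /\
  {in `]0%R, 1%R[ &, forall s t, (s <= t)%R -> (I s <= I t)%R} /\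
  (I x @[x --> (0:R)^'+] --> (0:R))%R /\
  (I x @[x --> (1:R)^'-] --> (1:R))%R /\
  {in `]0%R, 1%R[ &, forall s t, (s <= t)%R -> (I t / t <= I s / s)%R}.

Definition Mplus (f : R -> \bar R) : Prop :=
  measurable_fun I01 f /\ (forall x, (0 < x < 1)%R -> 0 <= f x).

Definition distf (f : R -> \bar R) (l : R) : \bar R :=
  mu (I01 `&` [set x | l%:E < f x]).

Definition rearr (f : R -> \bar R) (t : R) : \bar R :=
  ereal_inf [set l%:E | l in [set l : R | (0 <= l)%R /\ distf f l <= t%:E]].

Definition TI (I : R -> R) (f : R -> \bar R) (t : R) : \bar R :=
  (I t / t)%:E *
  ereal_sup [set (s / I s)%:E * rearr f s | s in [set s : R | (t <= s < 1)%R]].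

Definition mnorm (J : R -> R) (f : R -> \bar R) : \bar R :=
  ereal_sup [set (J t)%:E * rearr f t | t in I01].

Definition L1norm (f : R -> \bar R) : \bar R :=
  \int[mu]_(x in I01) f x.

Definition Itilde (I : R -> R) (t : R) : R := (t / I t)%R.

End Defs.

From HB Require Import structures.
From mathcomp Require Import all_boot all_order all_algebra.
From mathcomp Require Import all_classical all_reals all_analysis.
From mathcomp Require Import measurable_realfun.
From mathcomp Require Import ring lra.
Import Order.TTheory GRing.Theory Num.Theory.
Import numFieldNormedType.Exports.
Local Open Scope classical_set_scope.
Local Open Scope ring_scope.
Local Open Scope ereal_scope.

(* (i) T_I f is nonnegative and nonincreasing, hence (T_I f)^* <= T_I f, and
   Itilde(t) T_I f(t) = sup_{s >= t} Itilde(s) f^*(s) <= ||f||_{m_Itilde}.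
   (ii) Testing T_I on f = (I(t)/t) 1_(0, min(2t, 1)), whose rearrangement is
   at least I(t)/t on (0, t), gives int_0^t I(s)/s ds <= ||T_I f||_1
   <= C ||f||_1 <= 2C I(t).  Conversely, cut f into layers of height e:
   with lambda_n = |{f > n e}| we have f^* <= sum_n e 1_(0, lambda_n), and as
   Itilde is nondecreasing, T_I f(x) <= sum_n e 2 Itilde(lambda_n / 2)
   (I(x)/x) 1_(0, lambda_n)(x).  By the integral condition each term has
   integral at most (K + 1) e lambda_n, while sum_n e lambda_n <= e + ||f||_1;
   letting e tend to 0 gives ||T_I f||_1 <= (K + 1) ||f||_1. *)

Section layer_sums.
Context {R : realType} {e : R} (e_gt0 : (0 < e)%R).

Let layer_term_ge0 (b : bool) : 0 <= (e * b%:R)%:E.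
Proof. by rewrite lee_fin mulr_ge0 ?ler0n ?ltW. Qed.

(* If the sum S were below y then, with N = floor(S / e), every term k <= N
   would equal e (as k e <= S < y), whence S >= (N + 1) e > S. *)
Lemma le_sum_layers (y : \bar R) :
  y <= \sum_(k <oo) (e * ((k%:R * e)%:E < y)%E%:R)%:E.
Proof.
set S := \sum_(k <oo) _; rewrite leNgt; apply/negP => Sy.
have S0 : 0 <= S by apply: nneseries_ge0 => k _ _; exact: layer_term_ge0.
have Sfin : S \is a fin_num by rewrite ge0_fin_numE // (lt_le_trans Sy (leey _)).
set r := fine S; have Sr : S = r%:E by rewrite /r fineK.
have r0 : (0 <= r)%R by rewrite -lee_fin -Sr.
set N := Num.truncn (r / e).
have Ner : (N%:R * e <= r)%R by rewrite /N -ler_pdivlMr // truncn_le divr_ge0 // ltW.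
have partial : \sum_(0 <= k < N.+1) (e * ((k%:R * e)%:E < y)%E%:R)%:E = (N.+1%:R * e)%:E.
  rewrite sumEFin (eq_big_nat _ _ (F2 := fun=> e)) ?sumr_const_nat ?subn0 ?mulr_natl //.
  move=> k /andP[_]; rewrite ltnS => kN.
  by rewrite (le_lt_trans _ Sy) ?mulr1 // Sr lee_fin (le_trans _ Ner) // ler_pM2r // ler_nat.
have : (N.+1%:R * e)%:E <= S.
  by rewrite -partial; apply: nneseries_lim_ge => k _ _; exact: layer_term_ge0.
rewrite Sr lee_fin leNgt => /negP; apply.
by rewrite /N -ltr_pdivrMr // truncnS_gt.
Qed.

Lemma sum_layers_le (y : \bar R) : 0 <= y ->
  \sum_(k <oo) (e * ((k.+1%:R * e)%:E < y)%E%:R)%:E <= y.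
Proof.
case: y => [r| |] //; rewrite ?leey // lee_fin => r0.
set N := Num.truncn (r / e).
rewrite (@nneseries_split _ _ 0 N) ?add0n; last by move=> k _; exact: layer_term_ge0.
rewrite eseries0 ?adde0; last first.
  move=> k Nk _; have : (r <= k.+1%:R * e)%R.
    by rewrite -ler_pdivrMr // (le_trans (ltW (truncnS_gt _))) // ler_nat ltnS.
  by rewrite lte_fin ltNge => ->; rewrite mulr0.
apply: le_trans (_ : (N%:R * e)%:E <= _); last first.
  by rewrite lee_fin /N -ler_pdivlMr // truncn_le divr_ge0 // ltW.
rewrite sumEFin lee_fin mulr_natl -(subn0 N) -sumr_const_nat subn0.
by apply: ler_sum => k _; rewrite ger_pMr // lern1 leq_b1.
Qed.

End layer_sums.

Section integral_monotone.
Context {d : measure_display} {T : measurableType d} {R : realType}.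
Variable mu : {measure set T -> \bar R}.

Lemma ge0_le_integral_subset (D1 D2 : set T) (f g : T -> \bar R) :
  D1 `<=` D2 -> (forall x, D1 x -> 0 <= f x) -> (forall x, D1 x -> f x <= g x) ->
  (forall x, D2 x -> 0 <= g x) ->
  \int[mu]_(x in D1) f x <= \int[mu]_(x in D2) g x.
Proof.
move=> D12 f0 fg g0; rewrite (integral_mkcond D1) (integral_mkcond D2).
have f0' x : 0 <= (f \_ D1) x by rewrite patchE; case: ifPn => // /set_mem /f0.
have fg' x : (f \_ D1) x <= (g \_ D2) x.
  rewrite !patchE; case: ifPn => [/set_mem xD1|_]; last by case: ifPn => // /set_mem /g0.
  by rewrite mem_set ?fg //; exact: D12.
rewrite !ge0_integralTE //; last by move=> x; exact: le_trans (fg' x).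
apply: ge_ereal_sup => _ [h /= hf <-]; apply: ereal_sup_ubound; exists h => //.
by move=> x; exact: le_trans (hf x) (fg' x).
Qed.

End integral_monotone.

Section monotone_on_interval.
Context {R : realType}.

Lemma nonincreasing_superlevel_interval {dT} {U : porderType dT}
    (i : interval R) (g : R -> U) (a : U) :
  {in i &, forall x y, (x <= y)%R -> (g y <= g x)%O} ->
  is_interval ([set` i] `&` [set x | (a < g x)%O]).
Proof.
move=> gi x y [ix _] [iy ay] z /andP[xz zy].
have iz : z \in i by apply: (interval_is_interval ix iy); rewrite xz zy.
by split => //=; apply: lt_le_trans ay _; exact: gi.
Qed.

Lemma nonincreasing_measurable_itv (i : interval R) (g : R -> R) :
  {in i &, forall x y, (x <= y)%R -> (g y <= g x)%R} -> measurable_fun [set` i] g.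
Proof.
move=> gi; apply: (measurability (@RGenOInfty.G R)) => [|/= _ [_] [r] -> <-].
  exact: RGenOInfty.measurableE.
have -> : [set` i] `&` g @^-1` `]r, +oo[ = [set` i] `&` [set x | (r < g x)%R].
  by congr (_ `&` _); apply/seteqP; split => x /=; rewrite in_itv /= andbT.
by apply: is_interval_measurable; exact: nonincreasing_superlevel_interval.
Qed.

End monotone_on_interval.

Section unit_interval.
Context {R : realType}.
Notation mu := (@lebesgue_measure R).

Lemma I01E (t : R) : I01 t = (0 < t < 1)%R.
Proof. by rewrite /I01 /= in_itv. Qed.

Lemma measurable_I01 : measurable (@I01 R).
Proof. exact: measurable_itv. Qed.

Lemma lebesgue_measure_itv0 (a : R) : (0 <= a)%R -> mu `]0%R, a[ = a%:E.
Proof.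
rewrite le_eqVlt => /predU1P[<-|a0]; first by rewrite set_itvoo0 measure0.
by rewrite lebesgue_measure_itv /= lte_fin a0 oppr0 adde0.
Qed.

Lemma indic_itv0 (a x : R) : (0 < x)%R -> \1_`]0%R, a[ x = (x < a)%R%:R :> R.
Proof. by move=> x0; rewrite indicE mem_setE in_itv /= x0. Qed.

Lemma integral_I01_indic_itv0 (g : R -> R) (l : R) : (l <= 1)%R ->
  \int[mu]_(x in @I01 R) (g x * \1_`]0%R, l[ x)%:E = \int[mu]_(x in `]0%R, l[) (g x)%:E.
Proof.
move=> l1; have sub : `]0%R, l[ `<=` @I01 R.
  by move=> x /=; rewrite in_itv /= => /andP[x0 xl]; rewrite /I01 /= in_itv /= x0 (lt_le_trans xl l1).
rewrite -[in RHS](setIidr sub) integral_mkcondr; apply: eq_integral => x _.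
by rewrite patchE indicE; case: ifP; rewrite ?mulr1 ?mulr0.
Qed.

End unit_interval.

Section rearrangement.
Context {R : realType}.
Implicit Types (f g : R -> \bar R) (s t l : R).

Lemma rearr_ge0 f s : 0 <= rearr f s.
Proof. by apply: le_ereal_inf_tmp => _ [l [l0 _] <-]; rewrite lee_fin. Qed.

Lemma rearr_le f s l : (0 <= l)%R -> distf f l <= s%:E -> rearr f s <= l%:E.
Proof. by move=> l0 fl; apply: ereal_inf_lbound; exists l. Qed.

Lemma distf_gt f s l : (0 <= l)%R -> l%:E < rearr f s -> s%:E < distf f l.
Proof. by move=> l0; apply: contraTT; rewrite -!leNgt; exact: rearr_le. Qed.

Lemma rearr_ge f s c : (forall l, (0 <= l < c)%R -> s%:E < distf f l) ->
  c%:E <= rearr f s.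
Proof.
move=> fc; apply: le_ereal_inf_tmp => _ [l [l0 fl] <-]; rewrite lee_fin leNgt.
by apply/negP => lc; move: fl; rewrite leNgt fc // l0 lc.
Qed.

(* The superlevel set of g at level g t is an interval inside (0, t). *)
Lemma rearr_le_nonincreasing g t :
  {in `]0%R, 1%R[ &, forall x y, (x <= y)%R -> g y <= g x} ->
  (0 < t < 1)%R -> 0 <= g t -> rearr g t <= g t.
Proof.
move=> gD /andP[t0 t1]; case E : (g t) => [r| |] //; rewrite ?leey // lee_fin => r0.
apply: rearr_le => //; rewrite -(lebesgue_measure_itv0 _ (ltW t0)).
apply: le_measure; rewrite ?inE; last 2 first.
- exact: measurable_itv.
- move=> x [+ /= rx]; rewrite I01E => /andP[x0 x1]; rewrite in_itv /= x0 ltNge.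
  apply/negP => tx; have := gD t x; rewrite !in_itv /= t0 t1 x0 x1 => /(_ isT isT tx).
  by rewrite E leNgt rx.
by apply: is_interval_measurable; exact: nonincreasing_superlevel_interval.
Qed.

Section measurable_function.
Context {f : R -> \bar R} (mf : measurable_fun (@I01 R) f).

Lemma measurable_superlevel l : measurable (@I01 R `&` [set x | l%:E < f x]).
Proof.
have -> : @I01 R `&` [set x | l%:E < f x] = @I01 R `&` f @^-1` `]l%:E, +oo]%classic.
  by congr (_ `&` _); apply/seteqP; split => x /=; rewrite in_itv /= leey andbT.
by apply: mf; [exact: measurable_I01 | exact: emeasurable_itv].
Qed.

Lemma distf_le1 l : distf f l <= 1.
Proof.
rewrite /distf -[1](lebesgue_measure_itv0 _ (@ler01 R)).
by apply: le_measure; rewrite ?inE; [exact: measurable_superlevel|exact: measurable_I01|move=> x []].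
Qed.

Lemma distf_fin_num l : distf f l \is a fin_num.
Proof.
by rewrite ge0_fin_numE ?measure_ge0 // (le_lt_trans (distf_le1 l)) ?ltry.
Qed.

End measurable_function.
End rearrangement.

Definition layer {R : realType} (f : R -> \bar R) (e : R) (n : nat) : R :=
  fine (distf f (n%:R * e)).

Section layers.
Context {R : realType}.
Notation mu := (@lebesgue_measure R).
Context {f : R -> \bar R} (mf : measurable_fun (@I01 R) f).
Context {e : R} (e_gt0 : (0 < e)%R).

Lemma layerE n : (layer f e n)%:E = distf f (n%:R * e).
Proof. by rewrite fineK // distf_fin_num. Qed.

Lemma layer_ge0 n : (0 <= layer f e n)%R.
Proof. by rewrite -lee_fin layerE measure_ge0. Qed.

Lemma layer_le1 n : (layer f e n <= 1)%R.
Proof. by rewrite -lee_fin layerE distf_le1. Qed.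

Lemma rearr_le_layers s : (0 < s)%R ->
  rearr f s <= \sum_(n <oo) (e * \1_`]0%R, layer f e n[ s)%:E.
Proof.
move=> s0; apply: le_trans (le_sum_layers e_gt0 (rearr f s)) _.
apply: lee_nneseries => [n _ _|n _]; first by rewrite lee_fin mulr_ge0 ?ler0n ?ltW.
rewrite lee_fin ler_pM2l // indic_itv0 // ler_nat.
case: ltP => //= /distf_gt; rewrite -layerE lte_fin => -> //.
by rewrite mulr_ge0 ?ler0n ?ltW.
Qed.

Hypothesis f_ge0 : forall x, (0 < x < 1)%R -> 0 <= f x.

Lemma layers_le_L1norm : \sum_(k <oo) (e * layer f e k.+1)%:E <= L1norm f.
Proof.
pose A k := @I01 R `&` [set x | (k.+1%:R * e)%:E < f x].
have mA k : measurable (A k) := measurable_superlevel mf _.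
have A_ge0 k x : 0 <= (e * \1_(A k) x)%:E
  by rewrite lee_fin mulr_ge0 ?indicE ?ler0n // ltW.
have -> : \sum_(k <oo) (e * layer f e k.+1)%:E =
    \int[mu]_(x in @I01 R) \sum_(k <oo) (e * \1_(A k) x)%:E.
  rewrite integral_nneseries; last 3 first.
  - exact: measurable_I01.
  - by move=> k; apply/measurable_EFinP; apply: measurable_funM => //; exact: measurable_indic (mA k).
  - by move=> k x _; exact: A_ge0.
  apply: eq_eseriesr => k _; under eq_integral do rewrite EFinM.
  rewrite ge0_integralZl_EFin; last 4 first.
  - exact: measurable_I01.
  - by move=> x _; rewrite indicE lee0n.
  - by apply/measurable_EFinP; exact: measurable_indic (mA k).
  - exact: ltW.
  rewrite integral_indic; [|exact: measurable_I01|exact: mA].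
  by rewrite setIidl ?EFinM ?layerE // => x [].
apply: ge0_le_integral_subset => //.
- by move=> x _; apply: nneseries_ge0 => k _ _; exact: A_ge0.
- move=> x I01x; have fx0 : 0 <= f x by apply: f_ge0; rewrite -I01E.
  apply: le_trans _ (sum_layers_le e_gt0 _ fx0).
  apply: lee_nneseries => [k _ _|k _]; first exact: A_ge0.
  rewrite lee_fin ler_pM2l // indicE ler_nat.
  case: ltP => [_|fx]; first by rewrite leq_b1.
  by rewrite leqn0 eqb0; apply/negP => /set_mem [_ /=]; rewrite ltNge fx.
Qed.

Lemma sum_layers_le_L1norm : \sum_(n <oo) (e * layer f e n)%:E <= e%:E + L1norm f.
Proof.
have le0 n : 0 <= (e * layer f e n)%:E by rewrite lee_fin mulr_ge0 ?layer_ge0 // ltW.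
rewrite nneseries_recl // -(nneseries_addn 1) //; apply: leeD.
  by rewrite lee_fin ger_pMr // layer_le1.
by under eq_eseriesr do rewrite addn1; exact: layers_le_L1norm.
Qed.

End layers.

Definition step {R : realType} (c a : R) (x : R) : \bar R := (c * \1_`]0%R, a[ x)%:E.

Section step.
Context {R : realType}.
Notation mu := (@lebesgue_measure R).

Lemma Mplus_step (c a : R) : (0 <= c)%R -> Mplus (step c a).
Proof.
move=> c0; split => [|x _]; last by rewrite lee_fin mulr_ge0 ?indicE.
by apply/measurable_EFinP; apply: measurable_funM => //; exact: measurable_indic.
Qed.

Lemma L1norm_step (c a : R) : (0 <= c)%R -> (0 <= a <= 1)%R ->
  L1norm (step c a) = (c * a)%:E.
Proof.
move=> c0 /andP[a0 a1]; rewrite /L1norm /step; under eq_integral do rewrite EFinM.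
rewrite ge0_integralZl_EFin; last 4 first.
- exact: measurable_I01.
- by move=> x _; rewrite indicE lee0n.
- by apply/measurable_EFinP; exact: measurable_indic.
- exact: c0.
rewrite integral_indic; [|exact: measurable_I01|exact: measurable_itv].
rewrite setIidl; first by rewrite EFinM -(lebesgue_measure_itv0 _ a0).
move=> x /=; rewrite I01E !in_itv /=.
by move=> /andP[-> xa]; exact: lt_le_trans a1.
Qed.

Lemma rearr_step_ge (c a t : R) : (0 <= t)%R -> (t < a)%R -> (a <= 1)%R ->
  c%:E <= rearr (step c a) t.
Proof.
move=> t0 ta a1; apply: rearr_ge => l /andP[l0 lc].
have -> : distf (step c a) l = mu `]0%R, a[.
  congr mu; apply/seteqP; split => x.
    move=> [+ lx]; rewrite I01E /= in_itv /= => /andP[x0 _]; rewrite x0 /=.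
    move: lx; rewrite /step /= indic_itv0 //; case: (ltP x a) => //= _.
    by rewrite mulr0 lte_fin ltNge l0.
  rewrite /= in_itv /= => /andP[x0 xa]; split; first by rewrite I01E x0 (lt_le_trans xa a1).
  by rewrite /step indic_itv0 // xa mulr1 lte_fin.
by rewrite lebesgue_measure_itv0 ?lte_fin // (le_trans t0 (ltW ta)).
Qed.

End step.

Section quasiconcave_function.
Context {R : realType} {I : R -> R} (qcI : quasiconcave I).
Local Open Scope ring_scope.

Lemma qc_gt0 t : 0 < t < 1 -> 0 < I t.
Proof. by move=> /(qcI.1 t) /andP[]. Qed.

Lemma qc_le s t : 0 < s -> s <= t -> t < 1 -> I s <= I t.
Proof.
move=> s0 st t1; have [_ [_ [_ [Ile _]]]] := qcI.
by apply: Ile => //; rewrite in_itv /=; apply/andP; split; lra.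
Qed.

Lemma qc_ratio_le s t : 0 < s -> s <= t -> t < 1 -> I t / t <= I s / s.
Proof.
move=> s0 st t1; have [_ [_ [_ [_ [_ [_ Iratio]]]]]] := qcI.
by apply: Iratio => //; rewrite in_itv /=; apply/andP; split; lra.
Qed.

Lemma qc_ratio_gt0 t : 0 < t < 1 -> 0 < I t / t.
Proof. by move=> /[dup] /andP[t0 _] /qc_gt0 It0; rewrite divr_gt0. Qed.

Lemma Itilde_gt0 t : 0 < t < 1 -> 0 < Itilde I t.
Proof. by move=> /[dup] /andP[t0 _] /qc_gt0 It0; rewrite divr_gt0. Qed.

Lemma Itilde_mul_ratio t : 0 < t < 1 -> Itilde I t * (I t / t) = 1.
Proof.
move=> /[dup] /andP[t0 _] /qc_gt0 It0.
by rewrite /Itilde mulrA divfK ?mulfV // lt0r_neq0.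
Qed.

Lemma Itilde_le s t : 0 < s -> s <= t -> t < 1 -> Itilde I s <= Itilde I t.
Proof.
move=> s0 st t1; have s01 : 0 < s < 1 by apply/andP; split; lra.
have t01 : 0 < t < 1 by apply/andP; split; lra.
rewrite /Itilde -[s / _]invf_div -[t / _]invf_div lef_pV2 ?posrE ?qc_ratio_gt0 //.
exact: qc_ratio_le.
Qed.

(* Evaluating at [l / 2] rather than [l] avoids [I 1], about which nothing is
   assumed. *)
Lemma Itilde_le_half s l : 0 < s -> s < l -> l <= 1 ->
  Itilde I s <= 2 * Itilde I (l / 2).
Proof.
move=> s0 sl l1; have m01 : 0 < l / 2 < 1 by apply/andP; split; lra.
have Im0 := qc_gt0 _ m01; have Itm0 := Itilde_gt0 _ m01.
have [sm|ms] := leP s (l / 2).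
  by apply: le_trans (Itilde_le _ _ s0 sm _) _; lra.
have Is0 : 0 < I s by apply: qc_gt0; apply/andP; split; lra.
have -> : 2 * Itilde I (l / 2) = l / I (l / 2) by rewrite /Itilde; field; exact: lt0r_neq0.
rewrite /Itilde; apply: ler_pM; [lra | by rewrite invr_ge0 ltW | lra |].
by rewrite lef_pV2 ?posrE // qc_le //; lra.
Qed.

Lemma Itilde_indic_le x s l : 0 < x -> x <= s -> s < 1 -> l <= 1 ->
  Itilde I s * \1_`]0, l[ s <= 2 * Itilde I (l / 2) * \1_`]0, l[ x.
Proof.
move=> x0 xs s1 l1; rewrite !indic_itv0 ?(lt_le_trans x0 xs) //.
have [xl|lx] := ltP x l; last by rewrite (ltNge s) (le_trans lx xs) !mulr0.
have Itl0 : 0 < Itilde I (l / 2) by apply: Itilde_gt0; apply/andP; split; lra.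
case: ltP => sl; rewrite ?mulr0 ?mulr1 ?Itilde_le_half //; first lra.
by rewrite mulr_ge0 // ltW.
Qed.

Lemma Itilde_half_indic_ge0 x l : 0 < x < 1 -> l <= 1 ->
  0 <= 2 * Itilde I (l / 2) * \1_`]0, l[ x.
Proof.
move=> /andP[x0 x1] l1; apply: le_trans (Itilde_indic_le _ _ _ x0 (lexx x) x1 l1).
by rewrite mulr_ge0 ?indicE // ltW // Itilde_gt0 // x0.
Qed.

End quasiconcave_function.

Section TI_operator.
Context {R : realType} {I : R -> R} (qcI : quasiconcave I).
Notation mu := (@lebesgue_measure R).
Implicit Types f : R -> \bar R.

Lemma sup_Itilde_rearr_ge0 f t : (0 < t < 1)%R ->
  0 <= ereal_sup [set (Itilde I s)%:E * rearr f s | s in [set s | (t <= s < 1)%R]].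
Proof.
move=> /[dup] t01 /andP[_ t1]; apply: le_trans (ereal_sup_ubound _); last first.
  by exists t => //=; rewrite lexx t1.
by rewrite mule_ge0 ?rearr_ge0 // lee_fin ltW // Itilde_gt0.
Qed.

Lemma TI_ge0 f t : (0 < t < 1)%R -> 0 <= TI I f t.
Proof.
move=> t01; rewrite mule_ge0 ?sup_Itilde_rearr_ge0 //.
by rewrite lee_fin ltW // qc_ratio_gt0.
Qed.

Lemma TI_nonincreasing f :
  {in `]0%R, 1%R[ &, forall x y, (x <= y)%R -> TI I f y <= TI I f x}.
Proof.
move=> x y; rewrite !in_itv /= => /andP[x0 x1] /[dup] y01 /andP[y0 y1] xy.
apply: lee_pmul; rewrite ?lee_fin ?qc_ratio_le ?sup_Itilde_rearr_ge0 //.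
  by rewrite ltW // qc_ratio_gt0.
by apply: ereal_sup_le => _ [s /andP[ys s1] <-]; exists s => //=; rewrite (le_trans xy ys).
Qed.

Lemma mnorm_TI_le f : mnorm (Itilde I) (TI I f) <= mnorm (Itilde I) f.
Proof.
apply: ge_ereal_sup => _ [t + <-]; rewrite I01E => /[dup] t01 /andP[t0 t1].
apply: le_trans (_ : (Itilde I t)%:E * TI I f t <= _).
  apply: lee_wpmul2l; first by rewrite lee_fin ltW // Itilde_gt0.
  by apply: rearr_le_nonincreasing => //; [exact: TI_nonincreasing | exact: TI_ge0].
rewrite /TI muleA -EFinM Itilde_mul_ratio // mul1e; apply: ereal_sup_le => _ [s /andP[ts s1] <-].
by exists s => //; rewrite I01E (lt_le_trans t0 ts) s1.
Qed.

Lemma TI_step_ge t a x : (0 < x)%R -> (x < t)%R -> (t < a)%R -> (a <= 1)%R ->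
  (I x / x)%:E <= TI I (step (I t / t) a) x.
Proof.
move=> x0 xt ta a1; have t01 : (0 < t < 1)%R by apply/andP; split; lra.
have x01 : (0 < x < 1)%R by apply/andP; split; lra.
rewrite /TI -[leLHS]mule1 lee_wpmul2l //; first by rewrite lee_fin ltW // qc_ratio_gt0.
apply: le_trans (ereal_sup_ubound _); last by exists t => //=; rewrite (ltW xt); lra.
have -> : 1 = (Itilde I t)%:E * (I t / t)%:E by rewrite -EFinM Itilde_mul_ratio.
apply: lee_wpmul2l; first by rewrite lee_fin ltW // Itilde_gt0.
by apply: rearr_step_ge; lra.
Qed.

Lemma integral_condition_of_L1_bounded C : (0 <= C)%R ->
  (forall f, Mplus f -> L1norm (TI I f) <= C%:E * L1norm f) ->
  forall t, (0 < t < 1)%R -> \int[mu]_(s in `]0%R, t[) (I s / s)%:E <= (2 * C * I t)%:E.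
Proof.
move=> C0 TI_L1 t /andP[t0 t1]; have It0 : (0 < I t)%R by rewrite qc_gt0 // t0.
set a := Num.min (2 * t)%R 1%R; have ta : (t < a)%R by rewrite lt_min; apply/andP; split; lra.
have a1 : (a <= 1)%R by rewrite ge_min lexx orbT.
have c0 : (0 <= I t / t)%R by rewrite divr_ge0 ?ltW.
apply: (@le_trans _ _ (L1norm (TI I (step (I t / t) a)))).
  apply: ge0_le_integral_subset => [x|x|x|x].
  - by rewrite /= I01E !in_itv /= => /andP[-> xt]; lra.
  - by rewrite /= in_itv /= => /andP[x0 xt]; rewrite lee_fin ltW // qc_ratio_gt0 //; lra.
  - by rewrite /= in_itv /= => /andP[x0 xt]; exact: TI_step_ge.
  - by rewrite I01E; exact: TI_ge0.
apply: le_trans (TI_L1 _ (Mplus_step _ a c0)) _.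
rewrite L1norm_step //; last by apply/andP; split; lra.
have -> : (2 * C * I t = C * (I t / t * (2 * t)))%R by field; exact: lt0r_neq0.
by rewrite -EFinM lee_fin ler_wpM2l // ler_wpM2l // ge_min lexx.
Qed.

Lemma measurable_ratio : measurable_fun (@I01 R) (fun x => I x / x)%R.
Proof.
apply: nonincreasing_measurable_itv => x y.
by rewrite !in_itv /= => /andP[x0 _] /andP[_ y1] xy; exact: qc_ratio_le.
Qed.

Lemma measurable_ratio_itv0 (l : R) : (l <= 1)%R ->
  measurable_fun `]0%R, l[ (fun x => (I x / x)%:E).
Proof.
move=> l1; apply/measurable_EFinP; apply: (measurable_funS measurable_I01 _ measurable_ratio).
move=> x /=; rewrite in_itv /= => /andP[x0 xl].
by rewrite /I01 /= in_itv /= x0 (lt_le_trans xl l1).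
Qed.

Lemma integral_ratio_upper_half_le (l : R) : (0 < l)%R -> (l <= 1)%R ->
  \int[mu]_(x in `[(l / 2)%R, l[) (I x / x)%:E <= (I (l / 2))%:E.
Proof.
move=> l0 l1; apply: le_trans (_ : _ <= \int[mu]_(x in `[(l / 2)%R, l[) (I (l / 2) / (l / 2))%R%:E) _.
  apply: ge0_le_integral; first exact: measurable_itv.
  - move=> x; rewrite /= in_itv /= => /andP[mx xl].
    have x01 : (0 < x < 1)%R by apply/andP; split; lra.
    by rewrite lee_fin ltW // qc_ratio_gt0.
  - have sub : `[(l / 2)%R, l[ `<=` `]0%R, l[.
      by move=> x; rewrite /= !in_itv /= => /andP[mx ->]; rewrite andbT; lra.
    by have := measurable_funS (measurable_itv _) sub (measurable_ratio_itv0 _ l1).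
  - exact: measurable_cst.
  - move=> x; rewrite /= in_itv /= => /andP[mx xl].
    by rewrite lee_fin qc_ratio_le //; lra.
rewrite integral_cst; last exact: measurable_itv.
rewrite /= lebesgue_measure_itv /= lte_fin ifT; last lra.
have half : (l - l / 2 = l / 2)%R by field.
by rewrite -EFinD -EFinM half divfK // gt_eqF //; lra.
Qed.

Lemma TI_le_layers f (e x : R) : measurable_fun (@I01 R) f -> (0 < e)%R -> (0 < x < 1)%R ->
  TI I f x <= \sum_(n <oo)
    (I x / x * (e * (2 * Itilde I (layer f e n / 2)) * \1_`]0%R, layer f e n[ x))%:E.
Proof.
move=> mf e0 /[dup] x01 /andP[x0 x1].
have term_ge0 n : 0 <= (e * (2 * Itilde I (layer f e n / 2)) * \1_`]0%R, layer f e n[ x)%:E.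
  by rewrite lee_fin -mulrA mulr_ge0 ?Itilde_half_indic_ge0 ?layer_le1 // ltW.
rewrite /TI; under eq_eseriesr do rewrite EFinM.
rewrite nneseriesZl; last by move=> n _; exact: term_ge0.
apply: lee_wpmul2l; first by rewrite lee_fin ltW // qc_ratio_gt0.
apply: ge_ereal_sup => _ [s /andP[xs s1] <-].
have Its0 : (0 <= Itilde I s)%R by rewrite ltW // Itilde_gt0 // (lt_le_trans x0 xs).
have indic_ge0 n : 0 <= (e * \1_`]0%R, layer f e n[ s)%:E.
  by rewrite lee_fin mulr_ge0 ?indicE ?ler0n // ltW.
apply: le_trans (_ : (Itilde I s)%:E * \sum_(n <oo) (e * \1_`]0%R, layer f e n[ s)%:E <= _).
  by apply: lee_wpmul2l; rewrite ?lee_fin // rearr_le_layers // (lt_le_trans x0 xs).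
rewrite -nneseriesZl //; apply: lee_nneseries => [n _ _|n _].
  by apply: mule_ge0; [rewrite lee_fin | exact: indic_ge0].
rewrite -EFinM lee_fin mulrCA -mulrA; apply: ler_wpM2l; first exact: ltW.
exact: (Itilde_indic_le qcI _ _ _ x0 xs s1 (layer_le1 mf _)).
Qed.

Section integral_condition.
Variable K : R.
Hypothesis K_ge0 : (0 <= K)%R.
Hypothesis hK : forall t, (0 < t < 1)%R ->
  \int[mu]_(s in `]0%R, t[) (I s / s)%:E <= (K * I t)%:E.

Lemma integral_ratio_le (l : R) : (0 < l)%R -> (l <= 1)%R ->
  \int[mu]_(x in `]0%R, l[) (I x / x)%:E <= ((K + 1) * I (l / 2))%:E.
Proof.
move=> l0 l1; have m01 : (0 < l / 2 < 1)%R by apply/andP; split; lra.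
have hsplit : `]0%R, l[%classic = `]0%R, (l / 2)%R[ `|` `[(l / 2)%R, l[ :> set R.
  by rewrite -itv_bndbnd_setU // bnd_simp; lra.
rewrite hsplit ge0_integral_setU; last 5 first.
- exact: measurable_itv.
- exact: measurable_itv.
- by rewrite -hsplit; exact: measurable_ratio_itv0.
- rewrite -hsplit => x /=; rewrite in_itv /= => /andP[x0 xl].
  have x01 : (0 < x < 1)%R by apply/andP; split; lra.
  by rewrite lee_fin ltW // qc_ratio_gt0.
- by apply/disj_setPS => x [/=]; rewrite !in_itv /= => /andP[_ xm] /andP[mx _]; lra.
rewrite mulrDl mul1r EFinD leeD ?hK //.
exact: integral_ratio_upper_half_le.
Qed.

Lemma integral_layer_majorant_le (c l : R) : (0 <= c)%R -> (0 <= l <= 1)%R ->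
  \int[mu]_(x in @I01 R) (I x / x * (c * (2 * Itilde I (l / 2)) * \1_`]0%R, l[ x))%:E
    <= ((K + 1) * c * l)%:E.
Proof.
move=> c0 /andP[l0 l1]; have [->|l_neq0] := eqVneq l 0%R.
  by rewrite mulr0 integral0_eq // => x _; rewrite set_itvoo0 indic0 !mulr0.
have lpos : (0 < l)%R by rewrite lt_def l_neq0.
have m01 : (0 < l / 2 < 1)%R by apply/andP; split; lra.
have B0 : (0 <= c * (2 * Itilde I (l / 2)))%R.
  by rewrite mulr_ge0 // mulr_ge0 // ltW // Itilde_gt0.
under eq_integral do rewrite mulrCA EFinM.
rewrite ge0_integralZl_EFin; last 4 first.
- exact: measurable_I01.
- move=> x; rewrite I01E => x01; rewrite lee_fin mulr_ge0 ?indicE //.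
  by rewrite ltW // qc_ratio_gt0.
- by apply/measurable_EFinP; apply: measurable_funM; [exact: measurable_ratio | exact: measurable_indic].
- exact: B0.
rewrite integral_I01_indic_itv0 //.
apply: le_trans (lee_wpmul2l _ (integral_ratio_le _ lpos l1)) _; first by rewrite lee_fin.
rewrite -EFinM (_ : c * _ * _ = (K + 1) * c * l)%R //.
by rewrite /Itilde; field; exact: lt0r_neq0 (qc_gt0 qcI _ m01).
Qed.

Lemma L1_bounded_of_integral_condition f : Mplus f ->
  L1norm (TI I f) <= (K + 1)%:E * L1norm f.
Proof.
move=> [mf f0].
(* The bound holds up to any d > 0; the layer step e = d / (K + 1) absorbs d. *)
apply/lee_addgt0Pr => d d0; have K1 : (0 < K + 1)%R by rewrite ltr_wpDl.
pose e := (d / (K + 1))%R; have e0 : (0 < e)%R by rewrite divr_gt0.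
pose G n x := (I x / x * (e * (2 * Itilde I (layer f e n / 2)) * \1_`]0%R, layer f e n[ x))%:E.
have G_ge0 n x : @I01 R x -> 0 <= G n x.
  rewrite I01E => x01; rewrite lee_fin mulr_ge0 //; first by rewrite ltW // qc_ratio_gt0.
  by rewrite -mulrA mulr_ge0 ?Itilde_half_indic_ge0 ?layer_le1 // ltW.
apply: le_trans (_ : \int[mu]_(x in @I01 R) \sum_(n <oo) G n x <= _).
  apply: ge0_le_integral_subset => // x; rewrite I01E => x01.
  - exact: TI_ge0.
  - exact: TI_le_layers.
  - by apply: nneseries_ge0 => n _ _; apply: G_ge0; rewrite I01E.
rewrite integral_nneseries; last 3 first.
- exact: measurable_I01.
- move=> n; apply/measurable_EFinP; apply: measurable_funM; first exact: measurable_ratio.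
  by apply: measurable_funM => //; exact: measurable_indic.
- exact: G_ge0.
apply: le_trans (_ : \sum_(n <oo) ((K + 1) * e * layer f e n)%:E <= _).
  apply: lee_nneseries => [n _ _|n _]; first by apply: integral_ge0 => x; exact: G_ge0.
  apply: integral_layer_majorant_le; first exact: ltW.
  by rewrite layer_ge0 // layer_le1.
under eq_eseriesr do rewrite -mulrA EFinM.
rewrite nneseriesZl; last by move=> n _; rewrite lee_fin mulr_ge0 ?layer_ge0 // ltW.
apply: le_trans (lee_wpmul2l _ (sum_layers_le_L1norm mf e0 f0)) _; first by rewrite lee_fin ltW.
have L0 : 0 <= L1norm f by apply: integral_ge0 => x; rewrite I01E; exact: f0.
rewrite ge0_muleDr ?lee_fin ?(ltW e0) // -EFinM addeC.
by rewrite /e mulrC divfK // lt0r_neq0.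
Qed.

End integral_condition.
End TI_operator.

Theorem theorem3p5 (R : realType) (I : R -> R) :
  quasiconcave I ->
  (exists2 C : R, (0 < C)%R &
     forall f : R -> \bar R, Mplus f ->
       mnorm (Itilde I) (TI I f) <= C%:E * mnorm (Itilde I) f)
  /\
  ((exists2 C : R, (0 < C)%R &
      forall f : R -> \bar R, Mplus f -> L1norm (TI I f) <= C%:E * L1norm f)
   <->
   (exists2 C : R, (0 < C)%R &
      forall t : R, (0 < t < 1)%R ->
        \int[@lebesgue_measure R]_(s in `]0%R, t[) (I s / s)%:E
          <= (C * I t)%:E)).
Proof.
move=> qcI; split.
  by exists 1%R => // f _; rewrite mul1e; exact: mnorm_TI_le.
split=> [[C C0 TI_L1]|[K K0 hK]].
- exists (2 * C)%R; first by rewrite mulr_gt0.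
  exact: integral_condition_of_L1_bounded qcI _ (ltW C0) TI_L1.
- exists (K + 1)%R; first lra.
  by move=> f; exact: L1_bounded_of_integral_condition qcI _ (ltW K0) hK f.
Qed.
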